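(* Let $1\le d<n$, let $w\le v$ (Bruhat order) in $W^{P_d}=\{u\in S_n\mid u_1<\cdots<u_d,\ u_{d+1}<\cdots<u_n\}$, and let $\lambda=\lambda_w$, $\mu=\lambda_v$. Then the map $f$ defined by $$f(T)=\{(x,x+j-i)\mid (i,j)\in D_\lambda,\ x\in T(i,j)\}$$ is a bijection from $\mathcal T_\lambda(\mu)$ to $\mathcal E_\lambda(\mu)$.
   Context: For $u\in W^{P_d}$, $\lambda_u$ is the partition $(\lambda_u)_i=u_{d+1-i}-(d+1-i)$, $i=1,\ldots,d$; since $w\le v$, $\lambda_i\le\mu_i$ for all $i$. The Young diagram $D_\lambda$ is the set of boxes $(i,j)$ with $1\le i\le d$, $1\le j\le\lambda_i$ (rows numbered top to bottom, columns left to right), so $D_\lambda\subseteq D_\mu$. Excitations: for $C\subseteq D_\mu$ and $(i,j)\in C$ with $(i+1,j),(i,j+1),(i+1,j+1)\in D_\mu\setminus C$, a type 1 excitation replaces $C$ by $C\setminus\{(i,j)\}\cup\{(i+1,j+1)\}$ and a type 2 excitation replaces $C$ by $C\cup\{(i+1,j+1)\}$; $\mathcal E_\lambda(\mu)$ is the set of subsets of $D_\mu$ obtained from $D_\lambda$ by sequences of excitations. A set-valued filling of $D_\lambda$ assigns to each box $(i,j)$ a nonempty subset $T(i,j)\subseteq\{1,\ldots,d\}$; it is semistandard (a set-valued tableau) if every entry of box $(i,j)$ is $\le$ every entry of box $(i,j+1)$ and $<$ every entry of box $(i+1,j)$ whenever these boxes exist. It is restricted by $\mu$ if $x+j-i\le\mu_x$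 for every box $(i,j)$ and every $x\in T(i,j)$. $\mathcal T_\lambda(\mu)$ is the set of set-valued tableaux of shape $\lambda$ restricted by $\mu$. *)

From mathcomp Require Import all_boot all_fingroup.
Set Implicit Arguments. Unset Strict Implicit. Unset Printing Implicit Defensive.

(* 1-indexed one-line notation: pval u k = u_k for 1 <= k <= n (values in 1..n),
   where u : 'S_n acts on 'I_n = {0,...,n-1}; pval u k = 0 out of range. *)
Definition pval n (u : 'S_n) (k : nat) : nat :=
  match (insub k.-1 : option 'I_n) with Some o => (u o).+1 | None => 0 end.

Definition grassmannian n d (u : 'S_n) : Prop :=
  (forall a b, 1 <= a -> a < b -> b <= d -> pval u a < pval u b) /\
  (forall a b, d.+1 <= a -> a < b -> b <= n -> pval u a < pval u b).

Definition ninv n (u : 'S_n) : nat :=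
  #|[set p : 'I_n * 'I_n | (p.1 < p.2) && (u p.2 < u p.1)]|.

Definition bruhat_step n (u u' : 'S_n) : bool :=
  [exists i : 'I_n, exists j : 'I_n,
     [&& i < j, u' == (u * tperm i j)%g & ninv u < ninv u']].

Definition bruhat_le n (w v : 'S_n) : bool := connect (@bruhat_step n) w v.

Definition lambda_of n d (u : 'S_n) (i : nat) : nat :=
  pval u (d.+1 - i) - (d.+1 - i).

(* Boxes (i,j), 1-indexed coordinates; the ambient type 'I_d.+1 * 'I_n.+1
   is large enough to contain every Young diagram D_lambda with lambda_1 <= n - d. *)
Definition box (n d : nat) := ('I_d.+1 * 'I_n.+1)%type.

Definition diagram n d (lam : nat -> nat) : {set box n d} :=
  [set b : box n d | [&& 1 <= b.1, 1 <= b.2 & (b.2 : nat) <= lam b.1]].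

Definition exc_step n d (mu : nat -> nat) (C C' : {set box n d}) : bool :=
  [exists b : box n d, exists b1 : box n d, exists b2 : box n d,
   exists b3 : box n d,
    [&& b \in C,
        ((b1.1 : nat) == (b.1 : nat).+1) && ((b1.2 : nat) == b.2),
        ((b2.1 : nat) == b.1) && ((b2.2 : nat) == (b.2 : nat).+1),
        ((b3.1 : nat) == (b.1 : nat).+1) && ((b3.2 : nat) == (b.2 : nat).+1),
        b1 \in diagram n d mu :\: C, b2 \in diagram n d mu :\: C,
        b3 \in diagram n d mu :\: C &
        (C' == (C :\ b) :|: [set b3]) || (C' == C :|: [set b3])]].

Definition excitations n d (lam mu : nat -> nat) : {set {set box n d}} :=
  [set C | connect (@exc_step n d mu) (diagram n d lam) C].

(* set-valued fillings: a subset of {1..d} (encoded in 'I_d.+1, 0 excluded)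
   for each box; boxes outside D_lambda carry the empty set (normalization). *)
Definition filling n d := {ffun box n d -> {set 'I_d.+1}}.

Definition is_svt n d (lam mu : nat -> nat) (T : filling n d) : bool :=
  let D := diagram n d lam in
  [&& [forall b, (b \notin D) ==> (T b == set0)],
      [forall b, (b \in D) ==> (T b != set0)],
      [forall b, forall x, (x \in T b) ==> (1 <= x)],
      [forall b, forall b', [&& b \in D, b' \in D, (b'.1 : nat) == b.1 &
            (b'.2 : nat) == (b.2 : nat).+1] ==>
          [forall x, forall y, (x \in T b) && (y \in T b') ==> (x <= y)]],
      [forall b, forall b', [&& b \in D, b' \in D, (b'.1 : nat) == (b.1 : nat).+1 &
            (b'.2 : nat) == b.2] ==>
          [forall x, forall y, (x \in T b) && (y \in T b') ==> (x < y)]] &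
      [forall b, forall x, (b \in D) && (x \in T b) ==>
          (x + b.2 - b.1 <= mu x)]].

Definition svt_set n d (lam mu : nat -> nat) : {set filling n d} :=
  [set T | @is_svt n d lam mu T].

Definition fmap n d (lam : nat -> nat) (T : filling n d) : {set box n d} :=
  [set c : box n d | [exists b, exists x,
     [&& b \in diagram n d lam, x \in T b, (c.1 : nat) == x &
         (c.2 : nat) == x + b.2 - b.1]]].

Arguments diagram : clear implicits.
Arguments exc_step : clear implicits.
Arguments excitations : clear implicits.
Arguments is_svt : clear implicits.
Arguments svt_set : clear implicits.
Arguments fmap : clear implicits.

(* A Bruhat step u -> u (i j) with i < j increases the number of inversions, which forces
   the value i to stand before j in u; so going up in Bruhat order only moves large values
   to earlier positions, and for Grassmannian w <= v this gives w_k <= v_k for k <= d,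
   i.e. lambda <= mu.

   Entries of a set-valued tableau strictly increase along each diagonal j - i, so a value x
   occurs at most once per diagonal and f(T) records exactly the pairs (value, diagonal);
   T is recovered from f(T) box by box, ordering boxes by diagonal and then by row.
   If some entry x of T exceeds its row index, lowering the topmost-leftmost such entry to
   x - 1 gives a tableau of smaller weight whose image excites to f(T) (by a type 2
   excitation exactly when x - 1 was already in that box); if none does, T(i, j) = {i} and
   f(T) = D_lambda, so every f(T) is an excitation. Conversely, an excitation of f(T) at the
   cell of an entry x is realised by raising that entry to x + 1, keeping x for type 2. *)

From mathcomp Require Import all_boot all_fingroup zify.
Set Implicit Arguments. Unset Strict Implicit. Unset Printing Implicit Defensive.

Lemma pvalS n (u : 'S_n) (o : 'I_n) : pval u o.+1 = (u o).+1.
Proof.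
rewrite /pval /=; case: insubP => [o' _ Ho'|]; last by rewrite ltn_ord.
by congr (_.+1); congr (u _); apply: val_inj.
Qed.

Lemma pval_le n (u : 'S_n) k : pval u k <= n.
Proof. by rewrite /pval; case: insub => [o|] //; apply: ltn_ord. Qed.

Lemma grassmannian_lt n d (u : 'S_n) (o o' : 'I_n) :
  grassmannian d u -> o < o' -> o' < d -> u o < u o'.
Proof. by case=> G _ lt_oo' lt_o'd; have := G o.+1 o'.+1; rewrite !pvalS ltnS; apply; lia. Qed.

Definition inversions n (s : 'S_n) : {set 'I_n * 'I_n} :=
  [set pr : 'I_n * 'I_n | (pr.1 < pr.2) && (s pr.2 < s pr.1)].

Section InversionSwap.
Variables (n : nat) (u : 'S_n) (a b : 'I_n).
Hypotheses (lt_ab : a < b) (inv_ab : u b < u a).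

Definition swap_inversion (pr : 'I_n * 'I_n) :=
  if ((pr.1 < a) && (pr.2 \in [set a; b])) || ((b < pr.2) && (pr.1 \in [set a; b]))
  then (tperm a b pr.1, tperm a b pr.2) else pr.

Lemma tperm_ab_in (x : 'I_n) : x \in [set a; b] -> tperm a b x \in [set a; b].
Proof. by rewrite !inE => /orP [] /eqP ->; rewrite ?tpermL ?tpermR eqxx ?orbT. Qed.

Lemma tperm_ab_out (x : 'I_n) : x \notin [set a; b] -> tperm a b x = x.
Proof. by rewrite !inE negb_or => /andP [xa xb]; rewrite tpermD // eq_sym. Qed.

Lemma swap_inversionK : involutive swap_inversion.
Proof.
case=> x y; rewrite {2}/swap_inversion /=.
case: ifP => [/orP [/andP [lt_xa yab]|/andP [lt_by xab]]|no_swap]; rewrite /swap_inversion /=.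
- have xab : x \notin [set a; b] by rewrite !inE -!val_eqE /=; lia.
  by rewrite (tperm_ab_out xab) lt_xa tperm_ab_in //= tpermK (tperm_ab_out xab).
- have yab : y \notin [set a; b] by rewrite !inE -!val_eqE /=; lia.
  by rewrite (tperm_ab_out yab) lt_by tperm_ab_in ?orbT //= tpermK (tperm_ab_out yab).
- by rewrite no_swap.
Qed.

Lemma swap_inversion_sub : swap_inversion @: inversions (tperm a b * u) \subset inversions u.
Proof.
apply/subsetP=> pr /imsetP [[x y]]; rewrite inE /= !permM => /andP [lt_xy inv_xy] ->.
rewrite /swap_inversion inE /=.
case: ifP => [/orP [/andP [lt_xa yab]|/andP [lt_by xab]]|/negbT] /=.
- have xab : x \notin [set a; b] by rewrite !inE -!val_eqE /=; lia.
  apply/andP; split => //; rewrite (tperm_ab_out xab).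
  by move: yab; rewrite !inE => /orP [] /eqP ->; rewrite ?tpermL ?tpermR; lia.
- have yab : y \notin [set a; b] by rewrite !inE -!val_eqE /=; lia.
  apply/andP; split => //; rewrite (tperm_ab_out yab).
  by move: xab; rewrite !inE => /orP [] /eqP ->; rewrite ?tpermL ?tpermR; lia.
rewrite lt_xy !inE -!val_eqE negb_or !negb_and -!leqNgt /= => /andP [no_swap_x no_swap_y].
move: inv_xy; case: (tpermP a b x) => [|| _ _]; case: (tpermP a b y) => [|| _ _];
  move=> *; subst; rewrite -?val_eqE in no_swap_x no_swap_y *; lia.
Qed.

Lemma ninv_tpermM_le : ninv (tperm a b * u) <= ninv u.
Proof.
rewrite /ninv -(card_imset _ (inv_inj swap_inversionK)).
exact: subset_leq_card swap_inversion_sub.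
Qed.

End InversionSwap.

Definition prefix_count_ge n (u : 'S_n) (k m : nat) : nat :=
  \sum_(x < n) ((x < k) && (m <= u x)).

Lemma mulg_tperm n (u : 'S_n) (i j : 'I_n) :
  (u * tperm i j = tperm ((u^-1)%g i) ((u^-1)%g j) * u)%g.
Proof. by rewrite [RHS]conjgC tpermJ !permKV. Qed.

Lemma bruhat_step_positions n (u : 'S_n) (i j : 'I_n) :
  i < j -> ninv u < ninv (u * tperm i j) -> (u^-1)%g i < (u^-1)%g j.
Proof.
move=> lt_ij; rewrite mulg_tperm ltnNge; case: ltngtP => // [lt_qp|/val_inj eq_pq] /negP []; last first.
  by move: lt_ij; rewrite -(permKV u i) -(permKV u j) eq_pq ltnn.
by rewrite tpermC; apply: ninv_tpermM_le; rewrite ?permKV.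
Qed.

Lemma prefix_count_ge_tpermM n (u : 'S_n) (p q : 'I_n) k m :
  p < q -> u p < u q -> prefix_count_ge u k m <= prefix_count_ge (tperm p q * u) k m.
Proof.
move=> lt_pq lt_upq; have neq_qp : q != p by rewrite -val_eqE /=; lia.
have split_pq (s : 'S_n) : prefix_count_ge s k m =
    ((p < k) && (m <= s p)) + ((q < k) && (m <= s q))
    + \sum_(x < n | (x != p) && (x != q)) ((x < k) && (m <= s x)).
  by rewrite /prefix_count_ge (bigD1 p) //= (bigD1 q) //= addnA.
rewrite !split_pq.
under [X in _ <= _ + X]eq_bigr => x /andP [xp xq] do rewrite permM tpermD 1?eq_sym //.
rewrite !permM tpermL tpermR leq_add2r; have [lt_pk|le_kp] := ltnP p k; have [lt_qk|le_kq] := ltnP q k => //=.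
- by rewrite addnC.
- rewrite !addn0; case: (leqP m (u p)) => //= le_m.
  by rewrite (leq_trans le_m (ltnW lt_upq)).
- by exfalso; lia.
Qed.

Lemma bruhat_le_prefix_count_ge n (w v : 'S_n) k m :
  bruhat_le w v -> prefix_count_ge w k m <= prefix_count_ge v k m.
Proof.
case/connectP=> s; elim: s w => [|u s IH] w /= => [_ ->//|/andP [step path_s] last_s].
apply: leq_trans (IH _ path_s last_s).
case/existsP: step => i /existsP [j /and3P [lt_ij /eqP -> lt_inv]].
rewrite mulg_tperm; apply: prefix_count_ge_tpermM; last by rewrite !permKV.
exact: bruhat_step_positions.
Qed.

Lemma bruhat_le_grassmannian n d (w v : 'S_n) (o : 'I_n) :
  grassmannian d w -> grassmannian d v -> bruhat_le w v -> o < d -> w o <= v o.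
Proof.
move=> Gw Gv le_wv lt_od; rewrite leqNgt; apply/negP => lt_vw.
have := bruhat_le_prefix_count_ge d (w o) le_wv; apply/negP; rewrite -ltnNge.
rewrite /prefix_count_ge (bigD1 o) //= [X in _ < X](bigD1 o) //= lt_od leqnn.
rewrite [w o <= v o]leqNgt lt_vw add0n add1n ltnS; apply: leq_sum => x neq_xo.
case: (ltnP x d) => //= lt_xd; case: leqP => //= le_wo_vx.
have [lt_ox|lt_xo|/val_inj eq_xo] := ltngtP o x; last by rewrite eq_xo eqxx in neq_xo.
- by have := grassmannian_lt Gw lt_ox lt_xd; lia.
- by have := grassmannian_lt Gv lt_xo lt_od; lia.
Qed.

Lemma lambda_of_nonincreasing n d (u : 'S_n) i :
  grassmannian d u -> 1 <= i -> i < d -> lambda_of d u i.+1 <= lambda_of d u i.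
Proof. by case=> G _ i_ge1 lt_id; rewrite /lambda_of subSS; have := G (d - i) (d.+1 - i); lia. Qed.

Lemma lambda_of_le n d (u : 'S_n) i : lambda_of d u i <= n.
Proof. by rewrite /lambda_of; have := pval_le u (d.+1 - i); lia. Qed.

Lemma lambda_of_bruhat_le n d (w v : 'S_n) i : d < n ->
  grassmannian d w -> grassmannian d v -> bruhat_le w v ->
  1 <= i <= d -> lambda_of d w i <= lambda_of d v i.
Proof.
move=> lt_dn Gw Gv le_wv /andP [i_ge1 le_id]; have lt_on : d - i < n by lia.
rewrite /lambda_of (_ : d.+1 - i = (Ordinal lt_on).+1); last by rewrite /=; lia.
by rewrite !pvalS leq_sub2r // ltnS (bruhat_le_grassmannian Gw Gv) //=; lia.
Qed.

Section Tableaux.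
Variables n d : nat.

Definition mkbox (i j : nat) : box n d := (inord i, inord j).

Lemma mkbox_val (b : box n d) : mkbox b.1 b.2 = b.
Proof. by case: b => i j; rewrite /mkbox !inord_val. Qed.

Lemma mkbox1 i j : i <= d -> (mkbox i j).1 = i :> nat.
Proof. by move=> le_id; rewrite /= inordK. Qed.

Lemma mkbox2 i j : j <= n -> (mkbox i j).2 = j :> nat.
Proof. by move=> le_jn; rewrite /= inordK. Qed.

Lemma eq_mkbox i j i' j' : i <= d -> j <= n -> i' <= d -> j' <= n ->
  (mkbox i j == mkbox i' j') = (i == i') && (j == j').
Proof. by move=> *; rewrite /mkbox xpair_eqE -!val_eqE /= !inordK. Qed.

Lemma box_bounds (b : box n d) : b.1 <= d /\ b.2 <= n.
Proof. by split; rewrite -ltnS; apply: ltn_ord. Qed.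

Lemma mem_diagram_mkbox (lam : nat -> nat) i j : i <= d -> j <= n ->
  (mkbox i j \in diagram n d lam) = [&& 1 <= i, 1 <= j & j <= lam i].
Proof. by move=> le_id le_jn; rewrite inE mkbox1 // mkbox2. Qed.

Definition entry (T : filling n d) (i j x : nat) : bool :=
  [&& i <= d, j <= n, x <= d & (inord x : 'I_d.+1) \in T (mkbox i j)].

Lemma entry_box (T : filling n d) (b : box n d) (x : 'I_d.+1) :
  entry T b.1 b.2 x = (x \in T b).
Proof.
have [le_b1 le_b2] := box_bounds b; have le_x : (x : nat) <= d by rewrite -ltnS.
by rewrite /entry le_b1 le_b2 le_x mkbox_val inord_val.
Qed.

Lemma eq_filling (T1 T2 : filling n d) :
  (forall i j x, entry T1 i j x = entry T2 i j x) -> T1 = T2.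
Proof. by move=> eqT; apply/ffunP => b; apply/setP => x; rewrite -!entry_box. Qed.

Definition update (T : filling n d) (b0 : box n d) (S : {set 'I_d.+1}) : filling n d :=
  [ffun b => if b == b0 then S else T b].

Lemma entry_update T r c S i j y : r <= d -> c <= n ->
  entry (update T (mkbox r c) S) i j y =
  if (i == r) && (j == c) then (y <= d) && ((inord y : 'I_d.+1) \in S) else entry T i j y.
Proof.
move=> le_rd le_cn; rewrite /entry ffunE.
have [le_id|lt_di] := leqP i d; last by rewrite (_ : i == r = false) //; apply/eqP; lia.
have [le_jn|lt_nj] := leqP j n; last by rewrite (_ : j == c = false) ?andbF //; apply/eqP; lia.
by rewrite eq_mkbox //; case: ((i == r) && (j == c)).
Qed.

Definition move_entry (T : filling n d) (r c x x' : nat) (keep : bool) : filling n d :=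
  update T (mkbox r c)
    ((if keep then T (mkbox r c) else T (mkbox r c) :\ inord x) :|: [set inord x']).

Lemma entry_move_entry T r c x x' keep i j y :
  r <= d -> c <= n -> x <= d -> x' <= d ->
  entry (move_entry T r c x x' keep) i j y =
  if (i == r) && (j == c) then (entry T r c y && (keep || (y != x))) || (y == x')
  else entry T i j y.
Proof.
move=> le_rd le_cn le_xd le_x'd; rewrite entry_update //; case: ifP => // _.
have [le_yd|lt_dy] := leqP y d; last by apply/esym/norP; split; [rewrite /entry; lia|apply/eqP; lia].
rewrite /entry le_rd le_cn le_yd /=.
by case: keep; rewrite !inE -!val_eqE /= !inordK // ?andbT // andbC.
Qed.

Definition weight (T : filling n d) : nat := \sum_(b : box n d) \sum_(z in T b) (z : nat).

Lemma weight_update (T : filling n d) (b0 : box n d) (S : {set 'I_d.+1}) :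
  \sum_(z in S) (z : nat) < \sum_(z in T b0) (z : nat) -> weight (update T b0 S) < weight T.
Proof.
move=> lt_S; rewrite /weight (bigD1 b0) //= [X in _ < X](bigD1 b0) //= ffunE eqxx.
rewrite (eq_bigr (fun b => \sum_(z in T b) (z : nat))) ?ltn_add2r //.
by move=> b neq_b; rewrite ffunE (negbTE neq_b).
Qed.

Variables lam mu : nat -> nat.
Hypothesis lam_nonincr : forall i, 1 <= i -> i < d -> lam i.+1 <= lam i.
Hypothesis mu_nonincr : forall i, 1 <= i -> i < d -> mu i.+1 <= mu i.
Hypothesis lam_le_mu : forall i, 1 <= i <= d -> lam i <= mu i.
Hypothesis mu_le : forall i, mu i <= n.

Definition in_shape i j := [&& 1 <= i, i <= d, 1 <= j & j <= lam i].

Lemma in_shape_le i j : in_shape i j -> j <= n.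
Proof. by case/and4P=> ? ? _ le_j; apply: leq_trans le_j (leq_trans (lam_le_mu _) (mu_le i)); lia. Qed.

Lemma mem_diagram_in_shape (b : box n d) : (b \in diagram n d lam) = in_shape b.1 b.2.
Proof. by have [le_b1 _] := box_bounds b; rewrite inE /in_shape le_b1. Qed.

Lemma in_shape_mkbox i j : in_shape i j -> mkbox i j \in diagram n d lam.
Proof.
move=> ij_in; have le_jn := in_shape_le ij_in.
by case/and4P: ij_in => i_ge1 le_id j_ge1 le_j; rewrite mem_diagram_mkbox // i_ge1 j_ge1.
Qed.

Lemma in_shape_down i j i' j' :
  in_shape i' j' -> 1 <= i <= i' -> 1 <= j <= j' -> in_shape i j.
Proof.
move=> /and4P [_ le_i'd _ le_j'] /andP [i_ge1 le_ii'] /andP [j_ge1 le_jj'].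
rewrite /in_shape i_ge1 j_ge1 (leq_trans le_ii' le_i'd) /=.
move: le_i'd le_j'; have [k ->] : exists k, i' = i + k by exists (i' - i); lia.
elim: k => [|k IH] le_ikd le_j; first by rewrite addn0 in le_j; lia.
apply: IH; [lia | apply: leq_trans le_j _; rewrite addnS; apply: lam_nonincr; lia].
Qed.

Record svt_spec (T : filling n d) : Prop := SvtSpec {
  svt_supp : forall i j x, entry T i j x -> in_shape i j /\ 1 <= x;
  svt_nonempty : forall i j, in_shape i j -> exists x, entry T i j x;
  svt_row : forall i j x y, entry T i j x -> entry T i j.+1 y -> x <= y;
  svt_col : forall i j x y, entry T i j x -> entry T i.+1 j y -> x < y;
  svt_restricted : forall i j x, entry T i j x -> x + j - i <= mu x }.

Lemma is_svt_spec T : is_svt n d lam mu T -> svt_spec T.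
Proof.
case/and5P=> /forallP out0 /forallP in_ne /forallP pos /forallP row /andP [/forallP col /forallP rst].
have supp i j x : entry T i j x -> in_shape i j /\ 1 <= x.
  case/and4P=> le_id le_jn le_xd x_in; split; last first.
    by have := implyP (forallP (pos _) _) x_in; rewrite inordK.
  have : mkbox i j \in diagram n d lam.
    by apply: contraT => /(implyP (out0 _)) /eqP T0; rewrite T0 inE in x_in.
  by rewrite mem_diagram_mkbox // /in_shape le_id.
have box_entry i j x : entry T i j x -> exists b, [/\ b \in diagram n d lam,
    b.1 = i :> nat, b.2 = j :> nat, x <= d & (inord x : 'I_d.+1) \in T b].
  move=> ijx; have [/in_shape_mkbox ij_in _] := supp _ _ _ ijx.
  case/and4P: ijx => le_id le_jn le_xd x_in.
  by exists (mkbox i j); rewrite mkbox1 // mkbox2.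
split => //.
- move=> i j ij_in; have /set0Pn [x] := implyP (in_ne _) (in_shape_mkbox ij_in).
  have /and4P [_ le_id _ _] := ij_in; have le_jn := in_shape_le ij_in.
  by rewrite -entry_box mkbox1 // mkbox2 //; exists x.
- move=> i j x y /box_entry [b [b_in <- <- le_xd x_in]] /box_entry [b' [b'_in E1 E2 le_yd y_in]].
  have := implyP (forallP (row b) b') ; rewrite b_in b'_in E1 E2 !eqxx => /(_ isT).
  by move/forallP/(_ (inord x))/forallP/(_ (inord y)); rewrite x_in y_in !inordK // => /implyP; apply.
- move=> i j x y /box_entry [b [b_in <- <- le_xd x_in]] /box_entry [b' [b'_in E1 E2 le_yd y_in]].
  have := implyP (forallP (col b) b') ; rewrite b_in b'_in E1 E2 !eqxx => /(_ isT).
  by move/forallP/(_ (inord x))/forallP/(_ (inord y)); rewrite x_in y_in !inordK // => /implyP; apply.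
- move=> i j x /box_entry [b [b_in <- <- le_xd x_in]].
  by have := implyP (forallP (rst b) (inord x)); rewrite b_in x_in inordK //; apply.
Qed.

Lemma svt_spec_is_svt T : svt_spec T -> is_svt n d lam mu T.
Proof.
case=> supp ne row col rst; apply/and5P; split; [| | | | apply/andP; split].
- apply/forallP => b; apply/implyP => b_out; apply/eqP/setP => x; rewrite in_set0.
  apply/negP; rewrite -entry_box => /supp [b_in _].
  by rewrite mem_diagram_in_shape b_in in b_out.
- apply/forallP => b; apply/implyP; rewrite mem_diagram_in_shape => /ne [x].
  by case/and4P=> _ _ _; rewrite mkbox_val => x_in; apply/set0Pn; exists (inord x).
- apply/forallP => b; apply/forallP => x; apply/implyP; rewrite -entry_box.
  by case/supp.
- apply/forallP => b; apply/forallP => b'; apply/implyP => /and4P [_ _ /eqP E1 /eqP E2].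
  apply/forallP => x; apply/forallP => y; apply/implyP => /andP [x_in y_in].
  by apply: (row b.1 b.2); [rewrite entry_box | rewrite -E1 -E2 entry_box].
- apply/forallP => b; apply/forallP => b'; apply/implyP => /and4P [_ _ /eqP E1 /eqP E2].
  apply/forallP => x; apply/forallP => y; apply/implyP => /andP [x_in y_in].
  by apply: (col b.1 b.2); [rewrite entry_box | rewrite -E1 -E2 entry_box].
- apply/forallP => b; apply/forallP => x; apply/implyP => /andP [_ x_in].
  by apply: rst; rewrite entry_box.
Qed.

Lemma is_svtP T : reflect (svt_spec T) (is_svt n d lam mu T).
Proof. by apply: (iffP idP); [apply: is_svt_spec | apply: svt_spec_is_svt]. Qed.

Section Monotonicity.
Variable T : filling n d.
Hypothesis T_svt : svt_spec T.

Lemma entry_bounds i j x : entry T i j x -> 1 <= i <= d /\ 1 <= j <= lam i /\ 1 <= x <= d.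
Proof.
move=> ijx; have [/and4P [? ? ? ?] ?] := svt_supp T_svt ijx.
by case/and4P: ijx => _ _ ? _; lia.
Qed.

Lemma entry_row_le i j j' x y : j < j' -> entry T i j x -> entry T i j' y -> x <= y.
Proof.
move=> lt_jj'; have [k ->] : exists k, j' = (j + k).+1 by exists (j' - j).-1; lia.
elim: k y => [|k IH] y ijx ij'y.
  by rewrite addn0 in ij'y; exact: (svt_row T_svt ijx ij'y).
have := entry_bounds ijx; have := entry_bounds ij'y => bnd_y bnd_x.
have [z ijkz] : exists z, entry T i (j + k).+1 z by apply: (svt_nonempty T_svt); rewrite /in_shape; lia.
by apply: leq_trans (IH _ ijx ijkz) (svt_row T_svt ijkz _); rewrite -addnS.
Qed.

Lemma entry_col_lt i i' j x y : i < i' -> entry T i j x -> entry T i' j y -> x < y.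
Proof.
move=> lt_ii'; have [k ->] : exists k, i' = (i + k).+1 by exists (i' - i).-1; lia.
elim: k y => [|k IH] y ijx i'jy.
  by rewrite addn0 in i'jy; exact: (svt_col T_svt ijx i'jy).
have := entry_bounds ijx; have := entry_bounds i'jy => bnd_y bnd_x.
have lam_k : lam (i + k.+1).+1 <= lam (i + k).+1 by rewrite addnS; apply: lam_nonincr; lia.
have [z ikjz] : exists z, entry T (i + k).+1 j z by apply: (svt_nonempty T_svt); rewrite /in_shape; lia.
by apply: ltn_trans (IH _ ijx ikjz) (svt_col T_svt ikjz _); rewrite -addnS.
Qed.
Lemma entry_lt i i' j j' x y :
  i < i' -> j <= j' -> entry T i j x -> entry T i' j' y -> x < y.
Proof.
move=> lt_ii'; rewrite leq_eqVlt => /predU1P [<-|lt_jj' ijx i'j'y]; first exact: entry_col_lt.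
have := entry_bounds ijx; have := entry_bounds i'j'y => bnd_y bnd_x.
have [z i'jz] : exists z, entry T i' j z by apply: (svt_nonempty T_svt); rewrite /in_shape; lia.
exact: leq_trans (entry_col_lt lt_ii' ijx i'jz) (entry_row_le lt_jj' i'jz i'j'y).
Qed.

Lemma entry_ge_row i j x : entry T i j x -> i <= x.
Proof.
elim: i j x => [//|i IH] j x ijx; have := entry_bounds ijx => bnd_x.
have [->|i_ge1] := posnP i; first by lia.
have lam_i : lam i.+1 <= lam i by apply: lam_nonincr; lia.
have [z ijz] : exists z, entry T i j z by apply: (svt_nonempty T_svt); rewrite /in_shape; lia.
by have := IH _ _ ijz; have := svt_col T_svt ijz ijx; lia.
Qed.

Lemma entry_diag_uniq i j i' j' x :
  entry T i j x -> entry T i' j' x -> j + i' = j' + i -> i = i' /\ j = j'.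
Proof.
move=> ijx i'j'x diag; case: (ltngtP i i') => [lt_ii'|lt_i'i|eq_ii'].
- have le_jj' : j <= j' by lia.
  by have := entry_lt lt_ii' le_jj' ijx i'j'x; rewrite ltnn.
- have le_j'j : j' <= j by lia.
  by have := entry_lt lt_i'i le_j'j i'j'x ijx; rewrite ltnn.
- by split => //; lia.
Qed.

End Monotonicity.

Lemma fmap_mkboxP T a e : svt_spec T -> a <= d -> e <= n ->
  reflect (exists i j, entry T i j a /\ a + j - i = e) (mkbox a e \in fmap n d lam T).
Proof.
move=> T_svt le_ad le_en; rewrite inE mkbox1 // mkbox2 //; apply: (iffP existsP).
  case=> b /existsP [x /and4P [_ x_in /eqP -> /eqP ->]].
  by exists b.1, b.2; rewrite entry_box.
case=> i [j [ija <-]]; have [/in_shape_mkbox ij_in _] := svt_supp T_svt ija.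
have /and4P [le_id le_jn _ a_in] := ija.
exists (mkbox i j); apply/existsP; exists (inord a).
by rewrite ij_in a_in mkbox1 // mkbox2 // inordK // !eqxx.
Qed.

Lemma mem_fmap T i j x : svt_spec T -> entry T i j x -> mkbox x (x + j - i) \in fmap n d lam T.
Proof.
move=> T_svt ijx; have := entry_bounds T_svt ijx; have := svt_restricted T_svt ijx.
by have := mu_le x => *; apply/fmap_mkboxP => //; [lia | lia | exists i, j].
Qed.

Lemma fmap_same_diag T1 T2 i j x : svt_spec T1 -> svt_spec T2 ->
  fmap n d lam T1 = fmap n d lam T2 -> entry T1 i j x ->
  exists i' j', entry T2 i' j' x /\ j + i' = j' + i.
Proof.
move=> T1_svt T2_svt eq_fmap ijx.
have := entry_bounds T1_svt ijx; have := svt_restricted T1_svt ijx; have := mu_le x => *.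
have le_xd : x <= d by lia.
have le_en : x + j - i <= n by lia.
have /(fmap_mkboxP T2_svt le_xd le_en) [i' [j' [i'j'x diag]]] :
  mkbox x (x + j - i) \in fmap n d lam T2 by rewrite -eq_fmap mem_fmap.
exists i', j'; split => //.
by have := entry_ge_row T1_svt ijx; have := entry_ge_row T2_svt i'j'x; lia.
Qed.

(* Lexicographic in (i - j, i); the shift by [n] keeps [i - j] from truncating. *)
Definition diag_rank i j := (n + i - j) * d.+1 + i.

Lemma diag_rank_lt_diag i j i' j' :
  i <= d -> n + i - j < n + i' - j' -> diag_rank i j < diag_rank i' j'.
Proof. by rewrite /diag_rank => le_id; move: (n + i - j) (n + i' - j') => a b lt_ab; nia. Qed.

Lemma entry_sub_by_rank (S1 S2 : filling n d) : svt_spec S1 -> svt_spec S2 ->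
  fmap n d lam S1 = fmap n d lam S2 -> forall i j,
  (forall i' j', diag_rank i' j' < diag_rank i j -> forall x, entry S1 i' j' x = entry S2 i' j' x) ->
  forall y, entry S2 i j y -> entry S1 i j y.
Proof.
move=> S1_svt S2_svt eq_S i j eq_below y ijy.
have [i' [j' [i'j'y diag]]] := fmap_same_diag S2_svt S1_svt (esym eq_S) ijy.
have := entry_bounds S2_svt ijy; have := entry_bounds S1_svt i'j'y => bnd' bnd.
case: (ltngtP i i') => [lt_ii'|lt_i'i|eq_ii'].
- have [w ij1w] : exists w, entry S1 i j.+1 w.
    apply: (svt_nonempty S1_svt); apply: (in_shape_down (svt_supp S1_svt i'j'y).1); lia.
  have le_jn : j <= n := in_shape_le (svt_supp S2_svt ijy).1.
  have ij1w2 : entry S2 i j.+1 w by rewrite -eq_below //; apply: diag_rank_lt_diag; lia.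
  have lt_jj' : j.+1 <= j' by lia.
  by have := svt_row S2_svt ijy ij1w2; have := entry_lt S1_svt lt_ii' lt_jj' ij1w i'j'y; lia.
- have i'j'y2 : entry S2 i' j' y.
    by rewrite -eq_below // /diag_rank (_ : n + i' - j' = n + i - j); lia.
  by have := entry_diag_uniq S2_svt ijy i'j'y2 diag; lia.
- have -> : j = j' by lia.
  by rewrite eq_ii'.
Qed.

Lemma fmap_inj T1 T2 : svt_spec T1 -> svt_spec T2 ->
  fmap n d lam T1 = fmap n d lam T2 -> T1 = T2.
Proof.
move=> T1_svt T2_svt eq_fmap; apply: eq_filling => i j x.
suff: forall m i j, diag_rank i j < m -> forall x, entry T1 i j x = entry T2 i j x by apply.
elim=> [//|m IH] {}i {}j lt_rank y; apply/idP/idP.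
- by apply: (entry_sub_by_rank T2_svt T1_svt (esym eq_fmap)) => i' j' lt' z; rewrite IH //; lia.
- by apply: (entry_sub_by_rank T1_svt T2_svt eq_fmap) => i' j' lt' z; rewrite IH //; lia.
Qed.

Lemma exc_stepP (C C' : {set box n d}) :
  reflect (exists a e, [/\ a < d, e < n, mkbox a e \in C,
             [&& mkbox a.+1 e \in diagram n d mu :\: C, mkbox a e.+1 \in diagram n d mu :\: C
               & mkbox a.+1 e.+1 \in diagram n d mu :\: C] &
             (C' == (C :\ mkbox a e) :|: [set mkbox a.+1 e.+1]) || (C' == C :|: [set mkbox a.+1 e.+1])])
    (exc_step n d mu C C').
Proof.
apply: (iffP existsP) => [[b /existsP [b1 /existsP [b2 /existsP [b3]]]]|].
  case/and5P=> b_in /andP [/eqP E11 /eqP E12] /andP [/eqP E21 /eqP E22] /andP [/eqP E31 /eqP E32].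
  move=> /and4P [b1_in b2_in b3_in C'E].
  have lt_b1 : b.1 < d by have := ltn_ord b3.1; rewrite E31 ltnS.
  have lt_b2 : b.2 < n by have := ltn_ord b3.2; rewrite E32 ltnS.
  have boxE (b' : box n d) : b' = mkbox b'.1 b'.2 by rewrite mkbox_val.
  exists b.1, b.2; split => //; first by rewrite -boxE.
  - rewrite [b1]boxE E11 E12 in b1_in; rewrite [b2]boxE E21 E22 in b2_in.
    by rewrite [b3]boxE E31 E32 in b3_in; rewrite b1_in b2_in b3_in.
  - by rewrite mkbox_val; rewrite [b3]boxE E31 E32 in C'E.
case=> a [e [lt_ad lt_en a_in /and3P [b1_in b2_in b3_in] C'E]].
exists (mkbox a e); apply/existsP; exists (mkbox a.+1 e); apply/existsP; exists (mkbox a e.+1).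
apply/existsP; exists (mkbox a.+1 e.+1).
by rewrite a_in b1_in b2_in b3_in C'E !mkbox1 ?mkbox2 // 1?ltnW // !eqxx.
Qed.

Lemma fmapP T b : svt_spec T ->
  reflect (exists i j y, entry T i j y /\ b = mkbox y (y + j - i)) (b \in fmap n d lam T).
Proof.
move=> T_svt; apply: (iffP idP) => [|[i [j [y [ijy ->]]]]]; last exact: mem_fmap.
have [le_b1 le_b2] := box_bounds b; rewrite -[b in b \in _]mkbox_val.
by case/(fmap_mkboxP T_svt le_b1 le_b2) => i [j [ijb eq_b2]]; exists i, j, b.1; rewrite eq_b2 mkbox_val.
Qed.

Lemma mkbox_entry_inj T i j y i' j' y' : svt_spec T -> entry T i j y -> entry T i' j' y' ->
  mkbox y (y + j - i) = mkbox y' (y' + j' - i') -> [/\ i = i', j = j' & y = y'].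
Proof.
move=> T_svt ijy i'j'y' eq_box; have := svt_restricted T_svt ijy.
have := svt_restricted T_svt i'j'y'; have := entry_bounds T_svt ijy.
have := entry_bounds T_svt i'j'y'; have := mu_le y; have := mu_le y' => *.
move/eqP: eq_box; rewrite eq_mkbox; try lia; case/andP => /eqP eq_y /eqP eq_diag; subst y'.
have := entry_ge_row T_svt ijy; have := entry_ge_row T_svt i'j'y' => *.
have diag : j + i' = j' + i by lia.
by have [-> ->] := entry_diag_uniq T_svt ijy i'j'y' diag.
Qed.

Section MoveEntry.
Variables (T : filling n d) (r c x x' : nat) (keep : bool).
Hypotheses (T_svt : svt_spec T) (rcx : entry T r c x) (le_x'd : x' <= d).

Local Notation T' := (move_entry T r c x x' keep).

Lemma entry_move_entry_bounds : [/\ r <= d, c <= n & x <= d].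
Proof.
have := entry_bounds T_svt rcx; have := in_shape_le (svt_supp T_svt rcx).1.
by move=> *; split; lia.
Qed.

Lemma entry_move_entry_new : entry T' r c x'.
Proof. by have [? ? ?] := entry_move_entry_bounds; rewrite entry_move_entry // !eqxx orbT. Qed.

Lemma entry_move_entry_old i j y :
  entry T i j y -> ~~ [&& i == r, j == c, y == x & ~~ keep] -> entry T' i j y.
Proof.
have [? ? ?] := entry_move_entry_bounds; rewrite entry_move_entry // => ijy.
case: ifP => [/andP [/eqP eq_i /eqP eq_j]|_ _]; last exact: ijy.
by subst; rewrite ijy !eqxx; case: keep; rewrite //= andbT => ->.
Qed.

Lemma entry_move_entry_sub i j y : entry T' i j y -> (i = r /\ j = c /\ y = x') \/ entry T i j y.
Proof.
have [? ? ?] := entry_move_entry_bounds; rewrite entry_move_entry //.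
case: ifP => [/andP [/eqP-> /eqP->] /orP [/andP [rcy _]|/eqP ->]|_]; by [right | left].
Qed.

Lemma fmap_move_entry : svt_spec T' -> x' != x ->
  fmap n d lam T' = (if keep then fmap n d lam T else fmap n d lam T :\ mkbox x (x + c - r))
                      :|: [set mkbox x' (x' + c - r)].
Proof.
move=> T'_svt neq_x'x; apply/setP => b; rewrite in_setU in_set1.
apply/idP/idP => [/(fmapP _ T'_svt) [i [j [y [ijy ->]]]]|].
  case: (entry_move_entry_sub ijy) => [[-> [-> ->]]|ijy_T]; first by rewrite eqxx orbT.
  have b_in := mem_fmap T_svt ijy_T; apply/orP; left.
  case: ifP => // nkeep; rewrite in_setD1 b_in andbT.
  apply/eqP => eq_box; have [eq_i eq_j eq_y] := mkbox_entry_inj T_svt ijy_T rcx eq_box.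
  subst.
  have [? ? ?] := entry_move_entry_bounds.
  by move: ijy; rewrite entry_move_entry // !eqxx /= eq_sym (negbTE neq_x'x) andbF.
case/orP => [b_in|/eqP ->]; last exact: mem_fmap T'_svt entry_move_entry_new.
have /(fmapP _ T_svt) [i [j [y [ijy eq_b]]]] : b \in fmap n d lam T.
  by case: keep b_in => //; rewrite in_setD1 => /andP [].
rewrite eq_b; apply: (mem_fmap T'_svt); apply: entry_move_entry_old => //.
apply/negP => /and4P [/eqP eq_i /eqP eq_j /eqP eq_y nkeep]; subst.
by move: b_in; rewrite (negbTE nkeep) in_setD1 eqxx.
Qed.

Hypothesis x'_pos : 1 <= x'.
Hypothesis x'_restricted : x' + c - r <= mu x'.
Hypothesis x'_left : forall y, entry T r c.-1 y -> y <= x'.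
Hypothesis x'_right : forall y, entry T r c.+1 y -> x' <= y.
Hypothesis x'_above : forall y, entry T r.-1 c y -> y < x'.
Hypothesis x'_below : forall y, entry T r.+1 c y -> x' < y.

Lemma move_entry_svt : svt_spec T'.
Proof.
have [r_in x_pos] := svt_supp T_svt rcx; have c_pos : 1 <= c by case/and4P: r_in.
split.
- move=> i j y /entry_move_entry_sub [[-> [-> ->]]|]; [by [] | exact: (svt_supp T_svt)].
- move=> i j ij_in; have [/andP [/eqP -> /eqP ->]|neq_rc] := boolP ((i == r) && (j == c)).
    by exists x'; apply: entry_move_entry_new.
  have [y ijy] := svt_nonempty T_svt ij_in; exists y.
  by apply: entry_move_entry_old => //; apply: contra neq_rc => /and4P [-> -> _ _].
- move=> i j y z /entry_move_entry_sub [[-> [-> ->]]|ijy] /entry_move_entry_sub [[ir [jc ->]]|ij1z].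
  + by lia.
  + exact: x'_right.
  + by apply: x'_left; rewrite -ir -jc.
  + exact: (svt_row T_svt ijy ij1z).
- move=> i j y z /entry_move_entry_sub [[-> [-> ->]]|ijy] /entry_move_entry_sub [[ir [jc ->]]|i1jz].
  + by lia.
  + exact: x'_below.
  + by apply: x'_above; rewrite -ir -jc.
  + exact: (svt_col T_svt ijy i1jz).
- move=> i j y /entry_move_entry_sub [[-> [-> ->]]|ijy] //; exact: (svt_restricted T_svt).
Qed.

End MoveEntry.

Section Lowering.
Variables (T : filling n d) (r c x : nat).
Hypotheses (T_svt : svt_spec T) (rcx : entry T r c x) (lt_rx : r < x).
Hypothesis above_low : forall i j y, i < r -> entry T i j y -> y <= i.
Hypothesis left_low : forall y, entry T r c.-1 y -> y <= r.

Local Notation T' := (move_entry T r c x x.-1 false).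

Let bnd := entry_bounds T_svt rcx.
Let rst := svt_restricted T_svt rcx.
Let le_pred_xd : x.-1 <= d. Proof. by lia. Qed.
Let mu_pred_x : mu x <= mu x.-1.
Proof. by have := mu_nonincr (i := x.-1); rewrite prednK; [apply; lia | lia]. Qed.

Lemma entry_lower_new : entry T' r c x.-1.
Proof. exact: entry_move_entry_new. Qed.

Lemma lower_svt : svt_spec T'.
Proof.
apply: move_entry_svt => //; try lia.
- by move=> y /left_low; lia.
- by move=> y /(svt_row T_svt rcx); lia.
- by move=> y /above_low; lia.
- by move=> y /(svt_col T_svt rcx); lia.
Qed.

Lemma weight_lower : weight T' < weight T.
Proof.
have x_in : (inord x : 'I_d.+1) \in T (mkbox r c) by case/and4P: rcx.
apply: weight_update; rewrite [X in _ < X](big_setD1 (inord x)) //= inordK; last by lia.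
have [x1_in|x1_out] := boolP ((inord x.-1 : 'I_d.+1) \in T (mkbox r c) :\ inord x).
  by rewrite (setUidPl _) ?sub1set // -[X in X < _]add0n ltn_add2r; lia.
by rewrite setUC big_setU1 //= inordK ?ltn_add2r; lia.
Qed.

Lemma fmap_lower :
  fmap n d lam T' = (fmap n d lam T :\ mkbox x (x + c - r)) :|: [set mkbox x.-1 (x.-1 + c - r)].
Proof.
by apply: (fmap_move_entry T_svt rcx le_pred_xd lower_svt); rewrite neq_ltn; lia.
Qed.

Lemma lower_below_notin : mkbox x (x.-1 + c - r) \notin fmap n d lam T'.
Proof.
have le_xd : x <= d by lia.
have le_en : x.-1 + c - r <= n by have := mu_le x; lia.
apply/negP => /(fmap_mkboxP lower_svt le_xd le_en) [i [j [ijx diag]]].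
case: (entry_move_entry_sub T_svt rcx le_pred_xd ijx) => [[_ [_ eq_x]]|{}ijx]; first by lia.
have := entry_ge_row T_svt ijx; have := entry_bounds T_svt ijx => *.
case: (ltngtP i r) => [lt_ir|lt_ri|eq_ir].
- by have := above_low lt_ir ijx; lia.
- have le_cj : c <= j by lia.
  by have := entry_lt T_svt lt_ri le_cj rcx ijx; rewrite ltnn.
- have eq_jc : j = c.-1 by lia.
  by rewrite eq_ir eq_jc in ijx; have := left_low ijx; lia.
Qed.

Lemma lower_right_notin : mkbox x.-1 (x + c - r) \notin fmap n d lam T'.
Proof.
have le_en : x + c - r <= n by have := mu_le x; lia.
apply/negP => /(fmap_mkboxP lower_svt le_pred_xd le_en) [i [j [ijx diag]]].
case: (entry_move_entry_sub T_svt rcx le_pred_xd ijx) => [[eq_i [eq_j eq_y]]|{}ijx]; first by lia.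
have := entry_ge_row T_svt ijx; have := entry_bounds T_svt ijx => *.
case: (ltngtP i r) => [lt_ir|lt_ri|eq_ir].
- by have := above_low lt_ir ijx; lia.
- have le_cj : c <= j by lia.
  by have := entry_lt T_svt lt_ri le_cj rcx ijx; lia.
- have eq_jc : j = c.+1 by lia.
  by rewrite eq_ir eq_jc in ijx; have := svt_row T_svt rcx ijx; lia.
Qed.

Lemma lower_diag_notin : mkbox x (x + c - r) \notin fmap n d lam T'.
Proof.
have le_en : x + c - r <= n by have := mu_le x; lia.
by rewrite fmap_lower !(in_setU, in_setD1, in_set1) eqxx /= eq_mkbox //; lia.
Qed.

Lemma lower_source_notin : ~~ entry T r c x.-1 -> mkbox x.-1 (x.-1 + c - r) \notin fmap n d lam T.
Proof.
move=> nrcx1; have le_en : x.-1 + c - r <= n by have := mu_le x; lia.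
apply/negP => /(fmap_mkboxP T_svt le_pred_xd le_en) [i [j [ijx1 diag]]].
have ijx1' : entry T' i j x.-1.
  by apply: (entry_move_entry_old T_svt rcx) => //; rewrite (_ : x.-1 == x = false) ?andbF //; lia.
have eq_box : mkbox x.-1 (x.-1 + j - i) = mkbox x.-1 (x.-1 + c - r) by rewrite diag.
have [eq_i eq_j _] := mkbox_entry_inj lower_svt ijx1' entry_lower_new eq_box.
by move: nrcx1; rewrite -eq_i -eq_j ijx1.
Qed.

Lemma lower_exc_step : exc_step n d mu (fmap n d lam T') (fmap n d lam T).
Proof.
have [x_eq e_eq] : x = x.-1.+1 /\ x + c - r = (x.-1 + c - r).+1 by lia.
apply/exc_stepP; exists x.-1, (x.-1 + c - r); rewrite -x_eq -e_eq.
have := mu_le x; split; try lia.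
- exact: mem_fmap lower_svt entry_lower_new.
- by rewrite !in_setD lower_below_notin lower_right_notin lower_diag_notin !mem_diagram_mkbox /=; lia.
have b3_in := mem_fmap T_svt rcx.
rewrite fmap_lower; apply/orP; have [rcx1|/lower_source_notin b_out] := boolP (entry T r c x.-1).
  right; apply/eqP/setP => z; rewrite !(in_setU, in_setD1, in_set1).
  case: (eqVneq z (mkbox x (x + c - r))) => [->|_]; first by rewrite b3_in orbT.
  by case: eqVneq => [->|_]; rewrite ?(mem_fmap T_svt rcx1) ?orbT ?orbF.
left; apply/eqP/setP => z; rewrite !(in_setU, in_setD1, in_set1).
case: (eqVneq z (mkbox x (x + c - r))) => [->|_]; first by rewrite b3_in orbT.
by case: eqVneq => [->|_]; rewrite ?(negbTE b_out) ?orbF.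
Qed.

End Lowering.

Lemma fmap_eq_diagram T : svt_spec T -> (forall i j x, entry T i j x -> x <= i) ->
  fmap n d lam T = diagram n d lam.
Proof.
move=> T_svt le_row; apply/setP => b; apply/(fmapP _ T_svt)/idP => [[i [j [y [ijy ->]]]]|].
  have -> : y = i by apply/anti_leq; rewrite (le_row _ _ _ ijy) (entry_ge_row T_svt ijy).
  by rewrite addKn in_shape_mkbox // (svt_supp T_svt ijy).1.
rewrite mem_diagram_in_shape => /(svt_nonempty T_svt) [y b_y]; exists b.1, b.2, y; split=> //.
have -> : y = b.1 by apply/anti_leq; rewrite (le_row _ _ _ b_y) (entry_ge_row T_svt b_y).
by rewrite addKn mkbox_val.
Qed.

Lemma lowerable_entry T : svt_spec T ->
  [exists i : 'I_d.+1, exists j : 'I_n.+1, exists x : 'I_d.+1, entry T i j x && (i < x)] ->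
  exists r c x, [/\ entry T r c x, r < x, (forall i j y, i < r -> entry T i j y -> y <= i)
                  & (forall y, entry T r c.-1 y -> y <= r)].
Proof.
move=> T_svt exP.
pose raised r c := [exists x : 'I_d.+1, entry T r c x && (r < x)].
have rowP : exists r : nat, [exists c : 'I_n.+1, raised r c].
  by case/existsP: exP => r ?; exists r.
case: (ex_minnP rowP) => r /existsP [c0 raised_c0] min_r.
have colP : exists c : nat, raised r c by exists c0.
case: (ex_minnP colP) => c /existsP [x /andP [rcx lt_rx]] min_c.
exists r, c, x; split => //.
- move=> i j y lt_ir ijy; rewrite leqNgt; apply/negP => lt_iy.
  have := entry_bounds T_svt ijy => bnd.
  have : [exists c : 'I_n.+1, raised i c].
    apply/existsP; exists (inord j); apply/existsP; exists (inord y).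
    by rewrite !inordK ?ijy ?lt_iy //; have := in_shape_le (svt_supp T_svt ijy).1; lia.
  by move/min_r; lia.
- move=> y rcy; rewrite leqNgt; apply/negP => lt_ry.
  have := entry_bounds T_svt rcy => bnd.
  have : raised r c.-1.
    by apply/existsP; exists (inord y); rewrite inordK ?rcy ?lt_ry //; lia.
  by move/min_c; have := entry_bounds T_svt rcx; lia.
Qed.

Lemma fmap_reachable T : svt_spec T ->
  connect (exc_step n d mu) (diagram n d lam) (fmap n d lam T).
Proof.
have [k] := ubnP (weight T); elim: k T => // k IH T lt_wk T_svt.
have [exP|noP] := boolP [exists i : 'I_d.+1, exists j : 'I_n.+1, exists x : 'I_d.+1,
                           entry T i j x && (i < x)].
  have [r [c [x [rcx lt_rx above_low left_low]]]] := lowerable_entry T_svt exP.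
  apply: connect_trans (connect1 (lower_exc_step T_svt rcx lt_rx above_low left_low)).
  apply: IH (lower_svt T_svt rcx lt_rx above_low left_low).
  exact: leq_trans (weight_lower T_svt rcx lt_rx) _.
rewrite fmap_eq_diagram // => i j x ijx; rewrite leqNgt; apply: contra noP => lt_ix.
have := entry_bounds T_svt ijx; have := in_shape_le (svt_supp T_svt ijx).1 => *.
apply/existsP; exists (inord i); apply/existsP; exists (inord j); apply/existsP; exists (inord x).
by rewrite !inordK ?ijx ?lt_ix //; lia.
Qed.

Lemma exc_step_fmap T C : svt_spec T -> exc_step n d mu (fmap n d lam T) C ->
  exists T', svt_spec T' /\ fmap n d lam T' = C.
Proof.
move=> T_svt /exc_stepP [a [e [lt_ad lt_en b_in /and3P [b1_in b2_in b3_in] C_E]]].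
have [le_ad le_en] := (ltnW lt_ad, ltnW lt_en).
have [r [c [rca diag]]] := fmap_mkboxP T_svt le_ad le_en b_in.
have := entry_bounds T_svt rca; have := entry_ge_row T_svt rca => le_ra bnd.
move: b1_in b2_in b3_in; rewrite !in_setD !mem_diagram_mkbox //.
move=> /andP [b1_out _] /andP [b2_out _] /and4P [_ _ _ mu_a1].
have T'_svt keep : svt_spec (move_entry T r c a a.+1 keep).
  apply: (move_entry_svt keep T_svt rca) => //; try lia.
  - by move=> y rc1y; have := svt_row T_svt rc1y; rewrite prednK; [move/(_ _ rca); lia | lia].
  - move=> y rc1y; have := svt_row T_svt rca rc1y; rewrite leq_eqVlt => /predU1P [eq_ay|//].
    have := mem_fmap T_svt rc1y; rewrite -eq_ay (_ : a + c.+1 - r = e.+1) ?(negbTE b2_out) //; lia.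
  - by move=> y r1cy; have := svt_col T_svt r1cy; rewrite prednK; [move/(_ _ rca); lia | lia].
  - move=> y r1cy; have := svt_col T_svt rca r1cy; rewrite leq_eqVlt => /predU1P [eq_ay|//].
    have := mem_fmap T_svt r1cy; rewrite -eq_ay (_ : a.+1 + c - r.+1 = e) ?(negbTE b1_out) //; lia.
have fmapE keep : fmap n d lam (move_entry T r c a a.+1 keep) =
    (if keep then fmap n d lam T else fmap n d lam T :\ mkbox a e) :|: [set mkbox a.+1 e.+1].
  rewrite (fmap_move_entry T_svt rca lt_ad (T'_svt keep)) ?diag ?gtn_eqF //.
  by rewrite (_ : a.+1 + c - r = e.+1) //; lia.
by case/orP: C_E => /eqP ->; [exists (move_entry T r c a a.+1 false) |
                             exists (move_entry T r c a a.+1 true)]; rewrite fmapE.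
Qed.

Definition row_filling : filling n d :=
  [ffun b => if b \in diagram n d lam then [set b.1] else set0].

Lemma entry_row_filling i j y : entry row_filling i j y = [&& i <= d, j <= n, in_shape i j & y == i].
Proof.
rewrite /entry ffunE; case: (leqP i d) => //= le_id; case: (leqP j n) => //= le_jn.
rewrite mem_diagram_mkbox // /in_shape le_id /=.
case: ifP => _; last by rewrite in_set0 andbF.
case: (leqP y d) => [le_yd|lt_dy]; last by apply/esym/negbTE/eqP; lia.
by rewrite in_set1 -val_eqE /= !inordK ?mkbox1.
Qed.

Lemma row_filling_svt : svt_spec row_filling.
Proof.
split => [i j y|i j ij_in|i j y z|i j y z|i j y]; rewrite ?entry_row_filling.
- by case/and4P=> _ _ ij_in /eqP ->; split=> //; case/and4P: ij_in.
- have /and4P [_ le_id _ _] := ij_in.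
  by exists i; rewrite entry_row_filling ij_in (in_shape_le ij_in) le_id eqxx.
- by case/and4P=> _ _ _ /eqP -> /and4P [_ _ _ /eqP ->].
- by case/and4P=> _ _ _ /eqP -> /and4P [_ _ _ /eqP ->].
- case/and4P=> _ _ /and4P [i_ge1 le_id _ le_j] /eqP ->.
  by have := lam_le_mu (i := i); rewrite i_ge1 le_id => /(_ isT); lia.
Qed.

Lemma fmap_row_filling : fmap n d lam row_filling = diagram n d lam.
Proof.
by apply: fmap_eq_diagram row_filling_svt _ => i j y; rewrite entry_row_filling => /and4P [_ _ _ /eqP ->].
Qed.

Lemma excitation_fmap C : connect (exc_step n d mu) (diagram n d lam) C ->
  exists T, svt_spec T /\ fmap n d lam T = C.
Proof.
case/connectP => p; rewrite -fmap_row_filling; move: row_filling row_filling_svt.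
elim: p => [|C1 p IH] T T_svt /=; first by move=> _ ->; exists T.
by case/andP => /(exc_step_fmap T_svt) [T' [T'_svt <-]] path_p; apply: IH T'_svt path_p.
Qed.

Theorem fmap_bij :
  {in svt_set n d lam mu &, injective (fmap n d lam)} /\
  [set fmap n d lam T | T in svt_set n d lam mu] = excitations n d lam mu.
Proof.
split=> [T1 T2|]; first by rewrite !inE => /is_svtP T1_svt /is_svtP T2_svt; apply: fmap_inj.
apply/setP => C; rewrite inE; apply/imsetP/idP => [[T]|/excitation_fmap [T [T_svt <-]]].
  by rewrite inE => /is_svtP T_svt ->; apply: fmap_reachable.
by exists T => //; rewrite inE; apply/is_svtP.
Qed.

End Tableaux.

Theorem proposition4p18 (n d : nat) (w v : 'S_n) :
  1 <= d -> d < n ->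
  grassmannian d w -> grassmannian d v -> bruhat_le w v ->
  {in svt_set n d (lambda_of d w) (lambda_of d v) &,
     injective (fmap n d (lambda_of d w))} /\
  [set fmap n d (lambda_of d w) T | T in svt_set n d (lambda_of d w) (lambda_of d v)]
    = excitations n d (lambda_of d w) (lambda_of d v).
Proof.
move=> _ lt_dn Gw Gv le_wv; apply: fmap_bij => i.
- exact: lambda_of_nonincreasing Gw.
- exact: lambda_of_nonincreasing Gv.
- exact: lambda_of_bruhat_le lt_dn Gw Gv le_wv.
- exact: lambda_of_le.
Qed.
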